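(* Let $N\in\mathbb{N}_+$, let $\mathcal{R}$ be a countable set, and let $f:\mathbb{R}^N\to\mathcal{R}$. Suppose $f$ admits a dominating set $S\subseteq[N]$ of sensitivity $s>0$. Let $\epsilon>0$ and consider the mechanism $\mathcal{A}$ which, on input $x\in\mathbb{R}^N$, samples independent random variables $X_i\sim\mathsf{Lap}(s/\epsilon)$ for $i\in S$, forms $\tilde x$ by $\tilde x^{(i)}=x^{(i)}+X_i$ for $i\in S$ and $\tilde x^{(i)}=x^{(i)}$ for $i\notin S$, and outputs $f(\tilde x)$. Then $\mathcal{A}$ is $(\epsilon,0)$-differentially private: for all neighboring $x,x'\in\mathbb{R}^N$ and all $y\in\mathcal{R}$, $\Pr[\mathcal{A}(x)=y]\le e^{\epsilon}\Pr[\mathcal{A}(x')=y]$.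
   Context: Two vectors $x,x'\in\mathbb{R}^N$ are neighboring if $\|x-x'\|_0\le 1$ and $\|x-x'\|_\infty\le 1$ (they differ in at most one coordinate, by at most $1$). For $x\in\mathbb{R}^N$ and $S\subseteq[N]$, $x|_S\in\mathbb{R}^S$ denotes the restriction of $x$ to the coordinates in $S$, and $f(x|_S,x|_{[N]\setminus S})$ means $f(x)$. Dominating set: $f$ admits a dominating set $S\subseteq[N]$ of sensitivity $s\ge 0$ if for every pair of neighboring $x,x'$ there is a vector $a\in\mathbb{R}^S$ with $\|a\|_1\le s$ such that (i) $a$ is a function only of $f(x)$ and $x'-x$, and (ii) $f(x'|_S+a,\;x'|_{[N]\setminus S})=f(x)$. $\mathsf{Lap}(b)$ is the Laplace distribution with density $\frac{1}{2b}e^{-|x|/b}$. *)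

From HB Require Import structures.
From mathcomp Require Import all_boot all_order all_algebra.
From mathcomp Require Import all_classical all_reals all_analysis.
Set Implicit Arguments. Unset Strict Implicit. Unset Printing Implicit Defensive.
Import Order.TTheory GRing.Theory Num.Theory.
Local Open Scope classical_set_scope.
Local Open Scope ring_scope.

Definition neighboring (R : realType) (N : nat) (x x' : N.-tuple R) : Prop :=
  exists i : 'I_N, (forall j : 'I_N, j != i -> tnth x j = tnth x' j) /\
                   `|tnth x i - tnth x' i| <= 1.

(* x' with the coordinates in S shifted by a (coordinates outside S unchanged):
   this is (x'|_S + a, x'|_{[N]\S}). *)
Definition shift_on (R : realType) (N : nat) (S : {set 'I_N}) (x : N.-tuple R)
  (a : 'I_N -> R) : N.-tuple R :=
  [tuple (if i \in S then tnth x i + a i else tnth x i) | i < N].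

(* f admits the dominating set S of sensitivity s: a is chosen by a function g
   of (f x) and (x' - x) only; ||a||_1 is computed over S. *)
Definition dominating_set (R : realType) (N : nat) (Rg : Type)
  (f : N.-tuple R -> Rg) (S : {set 'I_N}) (s : R) : Prop :=
  exists g : Rg -> ('I_N -> R) -> ('I_N -> R),
    forall x x' : N.-tuple R, neighboring x x' ->
      let a := g (f x) (fun i => tnth x' i - tnth x i) in
      \sum_(i in S) `|a i| <= s /\ f (shift_on S x' a) = f x.

Definition laplace_pdf (R : realType) (b : R) (t : R) : R :=
  (2 * b)^-1 * expR (- `|t| / b).

Definition is_laplace (d : measure_display) (T : measurableType d) (R : realType)
  (P : probability T R) (b : R) (X : T -> R) : Prop :=
  measurable_fun setT X /\
  forall A : set R, measurable A ->
    P (X @^-1` A) = (\int[lebesgue_measure]_(t in A) (laplace_pdf b t)%:E)%E.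

Definition mutually_independent (d : measure_display) (T : measurableType d)
  (R : realType) (P : probability T R) (N : nat) (S : {set 'I_N})
  (X : 'I_N -> T -> R) : Prop :=
  forall (J : {set 'I_N}) (A : 'I_N -> set R),
    J \subset S -> (forall i, measurable (A i)) ->
    P (\big[setI/setT]_(i in J) (X i @^-1` A i)) =
    (\prod_(i in J) P (X i @^-1` A i))%E.

Definition mech_event (T : Type) (R : realType) (N : nat) (Rg : Type)
  (f : N.-tuple R -> Rg) (S : {set 'I_N}) (X : 'I_N -> T -> R)
  (x : N.-tuple R) (y : Rg) : set T :=
  [set w | f (shift_on S x (fun i => X i w)) = y].

(* Write b = s / eps. On the event A(x) = y, the dominating set provides a
   shift a of the noise, depending only on y and x' - x, with ||a||_1 <= s, that
   turns the output of A on x into the output of A on x'.  Hence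
   Pr[A(x) = y] <= Pr[noise + a lands in the event "A(x') = y"].  Translating a
   single Laplace coordinate by t multiplies probabilities by at most
   exp(|t| / b), because the density ratio is bounded so by the triangle
   inequality.  By independence the joint law of the noise is the product of the
   law of one coordinate with the law of the others, so Fubini lets us translate
   the coordinates one at a time, for a total factor exp(||a||_1 / b) <= exp(eps). *)

From HB Require Import structures.
From mathcomp Require Import all_boot all_order all_algebra.
From mathcomp Require Import all_classical all_reals all_analysis.
From mathcomp Require Import measurable_realfun ring lra.
Import Order.TTheory GRing.Theory Num.Theory.
Local Open Scope classical_set_scope.
Local Open Scope ring_scope.
Set Implicit Arguments. Unset Strict Implicit. Unset Printing Implicit Defensive.

(* The measure instance that HB attaches to [pushforward m f], given
   [mf : measurable_fun setT f]. *)
Local Notation pushforward_measure m mf :=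
  (measure_function_pushforward__canonical__measure_function_Measure m mf).

Section lebesgue_translation.
Context (R : realType).
Local Notation mu := (@lebesgue_measure R).

Lemma measurable_addr (t : R) :
  measurable_fun (T := measurableTypeR R) (U := measurableTypeR R) setT
    (fun u : R => u + t).
Proof. exact: measurable_funD. Qed.

Lemma lebesgue_measure_addr (t : R) (A : set R) : measurable A ->
  mu ((fun u => u + t) @^-1` A) = mu A.
Proof.
move=> mA; apply/esym.
apply: (@lebesgue_measure_unique R (pushforward_measure mu (measurable_addr t)))
  => // _ [[a c] _ <-] /=.
rewrite /pushforward.
have -> : (fun u => u + t) @^-1` `]a, c] = `]a - t, c - t]%classic.
  by apply/seteqP; split => u /=; rewrite !in_itv /= ltrBlDr lerBrDr.
rewrite !lebesgue_measure_itv /= !lte_fin ltrD2r.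
by case: ifP => // _; rewrite -!EFinD; congr (_%:E); ring.
Qed.

Lemma ge0_integral_addr_preimage (t : R) (C : set R) (h : R -> \bar R) :
  measurable C -> measurable_fun setT h -> (forall u, (0 <= h u)%E) ->
  (\int[mu]_(u in (fun u => u + t)%R @^-1` C) h u =
   \int[mu]_(v in C) h (v - t)%R)%E.
Proof.
move=> mC mh h0.
transitivity (\int[@pushforward _ _ (measurableTypeR R) (measurableTypeR R) _
    mu (fun u : R => u + t)%R]_(v in C) h (v - t)%R)%E.
  symmetry; etransitivity.
    apply: (@ge0_integral_pushforward _ _ _ _ R _ (measurable_addr t) mu C
      (fun v => h (v - t)%R) mC).
    - apply: measurable_funTS; apply: measurableT_comp mh _.
      exact: measurable_funB.
    - by move=> v _; exact: h0.
  by apply: eq_integral => u _ /=; rewrite addrK.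
rewrite (eq_measure_integral mu) //; last first.
  by move=> mf A mA _; rewrite /= /pushforward; exact: lebesgue_measure_addr.
exact: measurable_addr.
Qed.

End lebesgue_translation.

Section laplace.
Context (R : realType) (b : R).
Hypothesis b_gt0 : 0 < b.

Lemma measurable_laplace_pdf : measurable_fun setT (laplace_pdf b).
Proof.
apply: measurable_funM => //; apply: measurableT_comp => //.
by apply: measurable_funM => //; apply: measurable_funN; exact: normr_measurable.
Qed.

Lemma laplace_pdf_ge0 (t : R) : 0 <= laplace_pdf b t.
Proof. by rewrite /laplace_pdf mulr_ge0 ?expR_ge0 // invr_ge0 mulr_ge0 // ltW. Qed.

Lemma laplace_pdf_subr_le (t v : R) :
  laplace_pdf b (v - t) <= expR (`|t| / b) * laplace_pdf b v.
Proof.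
rewrite /laplace_pdf mulrCA ler_wpM2l //; first by rewrite invr_ge0 mulr_ge0 // ltW.
rewrite -expRD ler_expR -mulrDl ler_pM2r ?invr_gt0 //.
have : `|v| <= `|v - t| + `|t| by rewrite -[X in `|X|](subrK t v) ler_normD.
lra.
Qed.

Lemma laplace_preimage_addr_le d (T : measurableType d) (P : probability T R)
    (Y : T -> R) (t : R) (C : set R) :
  is_laplace P b Y -> measurable C ->
  (P (Y @^-1` ((fun u => u + t)%R @^-1` C)) <=
    (expR (`|t| / b))%:E * P (Y @^-1` C))%E.
Proof.
move=> [mY lawY] mC.
have mCt : measurable ((fun u => u + t)%R @^-1` C).
  by rewrite -[X in measurable X]setTI; exact: measurable_addr.
have mpdf : measurable_fun setT (fun u => (laplace_pdf b u)%:E).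
  by apply/measurable_EFinP; exact: measurable_laplace_pdf.
rewrite (lawY _ mCt) (lawY _ mC) ge0_integral_addr_preimage //; last first.
  by move=> u; rewrite lee_fin laplace_pdf_ge0.
rewrite -ge0_integralZl_EFin ?expR_ge0 //; last 2 first.
- by move=> v _; rewrite lee_fin laplace_pdf_ge0.
- exact: measurable_funTS.
apply: ge0_le_integral => //.
- by move=> v _; rewrite lee_fin laplace_pdf_ge0.
- apply/measurable_EFinP; apply: measurable_funTS.
  by apply: measurableT_comp; [exact: measurable_laplace_pdf|exact: measurable_funB].
- apply/measurable_EFinP; apply: measurable_funTS.
  by apply: measurable_funM => //; exact: measurable_laplace_pdf.
- by move=> v _; rewrite lee_fin laplace_pdf_subr_le.
Qed.

End laplace.

Section product_measure_translation.
Local Open Scope ereal_scope.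
Context d (T1 : measurableType d) (R : realType).

Lemma measurable_addr_snd (t : R) :
  measurable_fun setT (fun p : T1 * R => (p.1, p.2 + t)%R).
Proof.
apply: (measurable_fun_pair measurable_fst).
by apply: measurable_funD => //; exact: measurable_snd.
Qed.

Variables (m1 : {measure set T1 -> \bar R}) (m2 : {sigma_finite_measure set R -> \bar R}).

Lemma product_measure1_addr_le (t c : R) (Z : set (T1 * R)) : (0 <= c)%R ->
  (forall C, measurable C -> m2 ((fun u => u + t)%R @^-1` C) <= c%:E * m2 C) ->
  measurable Z ->
  (m1 \x m2) ((fun p => (p.1, p.2 + t)%R) @^-1` Z) <= c%:E * (m1 \x m2) Z.
Proof.
move=> c0 m2t mZ.
have mZt : measurable ((fun p => (p.1, p.2 + t)%R) @^-1` Z).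
  by rewrite -[X in measurable X]setTI; exact: measurable_addr_snd.
rewrite /product_measure1 -ge0_integralZl_EFin //; last first.
  exact: measurable_fun_xsection.
apply: ge0_le_integral => //.
- exact: measurable_fun_xsection.
- by apply: measurable_funeM; exact: measurable_fun_xsection.
move=> p _ /=.
have -> : xsection ((fun p => (p.1, p.2 + t)%R) @^-1` Z) p =
    (fun u => u + t)%R @^-1` xsection Z p.
  by apply/seteqP; split => u; rewrite /xsection /= !inE.
by apply: m2t; exact: measurable_xsection.
Qed.

End product_measure_translation.

Lemma big_setIP (I : finType) (J : pred I) (U : Type) (F : I -> set U) (u : U) :
  (\big[setI/setT]_(i | J i) F i) u <-> (forall i, J i -> F i u).
Proof.
split; first by move=> FJu i Ji; move: FJu; rewrite (bigD1 i) //= => -[].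
by move=> FJu; apply: (big_ind (fun V : set U => V u)).
Qed.

Section tuple_measurable.
Context (R : realType) (N : nat).

Lemma measurable_mktuple d (U : measurableType d) (F : 'I_N -> U -> R) :
  (forall i, measurable_fun setT (F i)) ->
  measurable_fun setT (fun w => [tuple F i w | i < N]).
Proof.
move=> mF; apply/measurable_fun_tnthP => i.
rewrite (_ : _ \o _ = F i) //; apply/funext => w /=.
by rewrite tnth_mktuple.
Qed.

Definition translate (z : N.-tuple R) (a : 'I_N -> R) : N.-tuple R :=
  [tuple tnth z i + a i | i < N].

Lemma measurable_translate (a : 'I_N -> R) :
  measurable_fun setT (translate ^~ a).
Proof.
apply: measurable_mktuple => i; apply: measurable_funD => //.
exact: measurable_tnth.
Qed.

Definition restrict_to (s : seq 'I_N) (a : 'I_N -> R) (i : 'I_N) : R :=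
  if i \in s then a i else 0.

Lemma translate_restrict_nil (z : N.-tuple R) (a : 'I_N -> R) :
  translate z (restrict_to [::] a) = z.
Proof. by apply: eq_from_tnth => i; rewrite tnth_mktuple addr0. Qed.

Lemma translate_restrict_cons (z : N.-tuple R) (a : 'I_N -> R) j s : j \notin s ->
  translate z (restrict_to (j :: s) a) =
  translate (translate z (restrict_to [:: j] a)) (restrict_to s a).
Proof.
move=> js; apply: eq_from_tnth => i; rewrite !tnth_mktuple /restrict_to !inE.
by case: eqVneq => [->|_] /=; rewrite ?(negbTE js) ?addr0.
Qed.

Definition splice (j : 'I_N) (p : N.-tuple R * R) : N.-tuple R :=
  [tuple if i == j then p.2 else tnth p.1 i | i < N].

Lemma measurable_splice j : measurable_fun setT (splice j).
Proof.
apply: measurable_mktuple => i; case: (i == j); first exact: measurable_snd.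
exact: measurableT_comp (measurable_tnth i) measurable_fst.
Qed.

Definition box (A : 'I_N -> set R) : set (N.-tuple R) :=
  [set z | forall i, A i (tnth z i)].

Definition boxes : set (set (N.-tuple R)) :=
  [set B | exists2 A : 'I_N -> set R, (forall i, measurable (A i)) & B = box A].

Lemma box_bigsetI (A : 'I_N -> set R) :
  box A = \big[setI/setT]_i ((fun z : N.-tuple R => tnth z i) @^-1` A i).
Proof.
by apply/seteqP; split => z; [move=> Az; apply/big_setIP => i _; exact: Az
  |move/big_setIP => Az i; exact: Az].
Qed.

Lemma measurable_boxes : @measurable _ (N.-tuple R) = <<s boxes >>.
Proof.
apply/seteqP; split.
  apply: smallest_sub; first exact: smallest_sigma_algebra.
  move=> B; rewrite -bigcup_seq /= => -[i _ [Y mY <-]].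
  apply: sub_sigma_algebra.
  exists (fun k => if k == i then Y else setT); first by move=> k; case: ifP.
  apply/seteqP; split => z /=; first by move=> [_ Yz] k; case: ifP => // /eqP ->.
  by move=> Az; split => //; have := Az i; rewrite eqxx.
apply: smallest_sub; first exact: sigma_algebra_measurable.
move=> _ [A mA ->]; rewrite box_bigsetI.
apply: big_ind => //; first by move=> ? ? ? ?; exact: measurableI.
by move=> i _; rewrite -[X in measurable X]setTI; exact: measurable_tnth.
Qed.

Lemma setI_closed_boxes : setI_closed boxes.
Proof.
move=> _ _ [A mA ->] [B mB ->].
exists (fun i => A i `&` B i); first by move=> i; exact: measurableI.
apply/seteqP; split => z /=; first by move=> [Az Bz] i; split.
by move=> ABz; split => i; case: (ABz i).
Qed.

End tuple_measurable.

Section independence.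
Context (R : realType) (N : nat) (d : measure_display) (T : measurableType d)
  (P : probability T R) (S : {set 'I_N}) (X : 'I_N -> T -> R).
Hypothesis mX : forall i, i \in S -> measurable_fun setT (X i).
Hypothesis indepX : mutually_independent P S X.

Definition noise_but (j : 'I_N) (w : T) : N.-tuple R :=
  [tuple if (i \in S) && (i != j) then X i w else 0 | i < N].

Lemma measurable_noise_but j : measurable_fun setT (noise_but j).
Proof.
apply: measurable_mktuple => i.
by case: (boolP (_ && _)) => [/andP[/mX]|_] //; exact: measurable_cst.
Qed.

Lemma noise_but_boxE j (A : 'I_N -> set R) :
  (forall i, ~~ ((i \in S) && (i != j)) -> A i 0) ->
  noise_but j @^-1` box A = \big[setI/setT]_(i in S :\ j) (X i @^-1` A i).
Proof.
move=> A0; apply/seteqP; split => w.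
  move=> Aw; apply/big_setIP => i; rewrite in_setD1 => /andP[ij iS].
  by have := Aw i; rewrite /= tnth_mktuple iS ij.
move/big_setIP => Aw i; rewrite /= tnth_mktuple.
case: (boolP (_ && _)) => [|/A0 //]; rewrite andbC => iSj.
by apply: Aw; rewrite in_setD1.
Qed.

Lemma noise_but_box_indep j (A : 'I_N -> set R) (C : set R) : j \in S ->
  (forall i, measurable (A i)) -> measurable C ->
  P (noise_but j @^-1` box A `&` X j @^-1` C) =
  (P (noise_but j @^-1` box A) * P (X j @^-1` C))%E.
Proof.
move=> jS mA mC.
have [A0|] := pselect (forall i, ~~ ((i \in S) && (i != j)) -> A i 0); last first.
  move=> /existsNP[i /not_implyP[iSj nA0]].
  rewrite (_ : _ @^-1` _ = set0) ?set0I ?measure0 ?mul0e //.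
  by apply/seteqP; split => // w /(_ i); rewrite /= tnth_mktuple (negbTE iSj).
pose A' i := if i == j then C else A i.
have mA' i : measurable (A' i) by rewrite /A'; case: ifP.
have A'E (V : Type) (idx : V) (op : Monoid.com_law idx) (G : 'I_N -> set R -> V) :
    \big[op/idx]_(i in S :\ j) G i (A' i) = \big[op/idx]_(i in S :\ j) G i (A i).
  by apply: eq_bigr => i; rewrite /A' in_setD1 => /andP[/negbTE ->].
have := indepX (subxx S) mA'.
rewrite (big_setD1 j) // [in RHS](big_setD1 j) // /A' eqxx -/A'.
rewrite (A'E _ _ _ (fun i B => X i @^-1` B)) (A'E _ _ _ (fun i B => P (X i @^-1` B))).
rewrite -(indepX (subD1set S j) mA) -noise_but_boxE // => indepA'.
by rewrite setIC muleC; exact: indepA'.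
Qed.

(* Both sides are finite measures in [A] that agree on the pi-system of boxes. *)
Lemma noise_but_indep j (A : set (N.-tuple R)) (C : set R) : j \in S ->
  measurable A -> measurable C ->
  P (noise_but j @^-1` A `&` X j @^-1` C) =
  (P (noise_but j @^-1` A) * P (X j @^-1` C))%E.
Proof.
move=> jS mA mC.
have mXC : measurable (X j @^-1` C).
  by rewrite -[X in measurable X]setTI; exact: mX.
have PXC0 : (0 <= fine (P (X j @^-1` C)))%R by exact: fine_ge0.
pose m1 := pushforward_measure (mrestr P mXC) (measurable_noise_but j).
pose m2 := mscale (NngNum PXC0) (pushforward_measure P (measurable_noise_but j)).
have := @measure_unique _ R _ (@boxes R N) (fun=> setT) (@measurable_boxes R N)
  (@setI_closed_boxes R N) _ _ m1 m2 _ _ A mA.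
rewrite /m1 /m2 /= /mscale /= /pushforward /mrestr /= fineK ?fin_num_measure //.
move=> ->; first by rewrite muleC.
- by move=> _; exists (fun=> setT) => //; apply/seteqP; split.
- by rewrite bigcup_const.
- move=> _ [B mB ->].
  by rewrite /= /pushforward /mrestr /= noise_but_box_indep // muleC.
- move=> _; rewrite /= /pushforward /mrestr /=.
  apply: (le_lt_trans (probability_le1 _ _)); last exact: ltry.
  by apply: measurableI => //; rewrite preimage_setT.
Qed.

Lemma noise_but_joint_law j (mPsi : noise_but j \in mfun) (mXj : X j \in mfun)
    (Z : set (N.-tuple R * R)) : j \in S -> measurable Z ->
  (distribution P (mfun_Sub mPsi) \x distribution P (mfun_Sub mXj))%E Z =
  P ((fun w => (noise_but j w, X j w)) @^-1` Z).
Proof.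
move=> jS mZ.
have mV : measurable_fun setT (fun w => (noise_but j w, X j w)).
  by apply: measurable_fun_pair; [exact: measurable_noise_but|exact: mX].
rewrite (@product_measure_unique _ _ _ _ R _ _ (pushforward_measure P mV)) //.
move=> A B mA mB; exact: noise_but_indep.
Qed.

End independence.

Section laplace_noise.
Context (R : realType) (N : nat) (d : measure_display) (T : measurableType d)
  (P : probability T R) (S : {set 'I_N}) (X : 'I_N -> T -> R) (b : R).
Hypothesis b_gt0 : 0 < b.
Hypothesis lapX : forall i, i \in S -> is_laplace P b (X i).
Hypothesis indepX : mutually_independent P S X.

Let mX i : i \in S -> measurable_fun setT (X i).
Proof. by move=> /lapX[]. Qed.

Definition noise (w : T) : N.-tuple R := [tuple if i \in S then X i w else 0 | i < N].

Lemma measurable_noise : measurable_fun setT noise.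
Proof.
by apply: measurable_mktuple => i; case: (boolP (i \in S)) => [/mX|_] //.
Qed.

Lemma noise_translate1_le j (a : 'I_N -> R) (E : set (N.-tuple R)) :
  j \in S -> measurable E ->
  (P ((fun w => translate (noise w) (restrict_to [:: j] a)) @^-1` E) <=
   (expR (`|a j| / b))%:E * P (noise @^-1` E))%E.
Proof.
move=> jS mE.
have mPsi : noise_but S X j \in mfun by rewrite inE; exact: measurable_noise_but.
have mXj : X j \in mfun by rewrite inE; exact: mX.
pose V w := (noise_but S X j w, X j w).
pose D := splice j @^-1` E.
have mD : measurable D by rewrite -[X in measurable X]setTI; exact: measurable_splice.
have mDt : measurable ((fun p : N.-tuple R * R => (p.1, p.2 + a j)) @^-1` D).
  by rewrite -[X in measurable X]setTI; exact: measurable_addr_snd.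
have noiseE w : noise w = splice j (V w).
  apply: eq_from_tnth => i; rewrite !tnth_mktuple.
  by case: eqVneq => [->|ij]; rewrite ?jS ?andbT.
have noise_translateE w :
    translate (noise w) (restrict_to [:: j] a) = splice j ((V w).1, (V w).2 + a j).
  apply: eq_from_tnth => i; rewrite !tnth_mktuple /restrict_to inE.
  by case: eqVneq => [->|ij]; rewrite ?jS ?andbT ?addr0.
rewrite (_ : _ @^-1` E = V @^-1` ((fun p => (p.1, p.2 + a j)) @^-1` D)); last first.
  by apply/seteqP; split => w; rewrite /= /D /= noise_translateE.
rewrite (_ : noise @^-1` E = V @^-1` D); last first.
  by apply/seteqP; split => w; rewrite /= /D /= noiseE.
rewrite -!(noise_but_joint_law _ indepX mPsi mXj) //.
apply: product_measure1_addr_le => // C mC.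
exact: laplace_preimage_addr_le (lapX jS) mC.
Qed.

Lemma noise_translate_le (s : seq 'I_N) (a : 'I_N -> R) (E : set (N.-tuple R)) :
  uniq s -> {subset s <= S} -> measurable E ->
  (P ((fun w => translate (noise w) (restrict_to s a)) @^-1` E) <=
   (expR ((\sum_(i <- s) `|a i|) / b))%:E * P (noise @^-1` E))%E.
Proof.
elim: s E => [|j s IHs] E.
  move=> _ _ _; rewrite big_nil mul0r expR0 mul1e.
  by rewrite [X in P (X @^-1` E)](_ : _ = noise) //; apply/funext => w;
    exact: translate_restrict_nil.
move=> /= /andP[js us] sS mE.
have jS : j \in S by apply: sS; exact: mem_head.
have mEs : measurable ((fun z : N.-tuple R => translate z (restrict_to s a)) @^-1` E).
  by rewrite -[X in measurable X]setTI; exact: measurable_translate.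
rewrite [X in P (X @^-1` E)](_ : _ =
  fun w => translate (translate (noise w) (restrict_to [:: j] a)) (restrict_to s a));
  last by apply/funext => w; exact: translate_restrict_cons.
apply: le_trans (noise_translate1_le a jS mEs) _.
rewrite big_cons mulrDl expRD EFinM -muleA lee_wpmul2l ?lee_fin ?expR_ge0 //.
by apply: IHs => // i si; apply: sS; rewrite inE si orbT.
Qed.

End laplace_noise.

Section mechanism.
Context (R : realType) (N : nat) (Rg : Type) (f : N.-tuple R -> Rg) (S : {set 'I_N}).

Definition output_set (x : N.-tuple R) (y : Rg) : set (N.-tuple R) :=
  [set z | f (shift_on S x (fun i => tnth z i)) = y].

Lemma measurable_output_set x y : measurable (f @^-1` [set y]) ->
  measurable (output_set x y).
Proof.
move=> mfy.
have mshift : measurable_fun setT (fun z : N.-tuple R => shift_on S x (fun i => tnth z i)).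
  apply: measurable_mktuple => i; case: (i \in S); last exact: measurable_cst.
  by apply: measurable_funD => //; exact: measurable_tnth.
rewrite -[X in measurable X]setTI.
exact: (mshift measurableT _ mfy).
Qed.

Lemma mech_event_noiseE d (T : measurableType d) (X : 'I_N -> T -> R) x y :
  mech_event f S X x y = noise S X @^-1` output_set x y.
Proof.
apply/seteqP; split => w; rewrite /mech_event /output_set /=;
  rewrite (_ : shift_on S x _ = shift_on S x (fun i => tnth (noise S X w) i)) //;
  apply: eq_from_tnth => i; rewrite !tnth_mktuple;
  by case: (boolP (i \in S)) => iS //; rewrite tnth_mktuple iS.
Qed.

Lemma neighboring_shift_on (x x' : N.-tuple R) (a : 'I_N -> R) :
  neighboring x x' -> neighboring (shift_on S x a) (shift_on S x' a).
Proof.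
move=> [i [xx'E xx'i]]; exists i; split.
  by move=> j ji; rewrite !tnth_mktuple xx'E.
by rewrite !tnth_mktuple; case: (i \in S); rewrite // opprD addrACA subrr addr0.
Qed.

Lemma shift_on_subE (x x' : N.-tuple R) (a : 'I_N -> R) :
  (fun i => tnth (shift_on S x' a) i - tnth (shift_on S x a) i) =
  (fun i => tnth x' i - tnth x i).
Proof.
apply/funext => i; rewrite !tnth_mktuple.
by case: (i \in S); rewrite // opprD addrACA subrr addr0.
Qed.

Lemma dominating_set_translate (s : R) (x x' : N.-tuple R) (y : Rg) :
  dominating_set f S s -> 0 <= s -> neighboring x x' ->
  exists2 a : 'I_N -> R, \sum_(i in S) `|a i| <= s &
    output_set x y `<=`
    (fun z => translate z (restrict_to (enum S) a)) @^-1` output_set x' y.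
Proof.
move=> [g domg] s_ge0 xx'.
have [[z0 z0y]|noz] := pselect (exists z, output_set x y z); last first.
  exists (fun=> 0); first by rewrite big1 // => i; rewrite normr0.
  by move=> z zy; case: noz; exists z.
pose dx i := tnth x' i - tnth x i.
have domz z : let u := shift_on S x (fun i => tnth z i) in
    \sum_(i in S) `|g (f u) dx i| <= s /\
    f (shift_on S (shift_on S x' (fun i => tnth z i)) (g (f u) dx)) = f u.
  by have := domg _ _ (neighboring_shift_on (fun i => tnth z i) xx'); rewrite shift_on_subE.
exists (g y dx); first by have [] := domz z0; rewrite /= z0y.
move=> z zy; have [_] := domz z; rewrite /= zy => fE.
rewrite /output_set /= -[RHS]fE; congr f.
apply: eq_from_tnth => i; rewrite !tnth_mktuple /restrict_to mem_enum.
by case: (i \in S); rewrite ?addrA.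
Qed.

End mechanism.

Theorem theorem3p1 (R : realType) (N : nat) (Rg : countType)
  (f : N.-tuple R -> Rg) (S : {set 'I_N}) (s eps : R)
  (d : measure_display) (T : measurableType d) (P : probability T R)
  (X : 'I_N -> T -> R) :
  (0 < N)%N ->
  (forall y : Rg, measurable (f @^-1` [set y])) ->
  dominating_set f S s -> 0 < s -> 0 < eps ->
  (forall i, i \in S -> is_laplace P (s / eps) (X i)) ->
  mutually_independent P S X ->
  forall (x x' : N.-tuple R) (y : Rg), neighboring x x' ->
    (P (mech_event f S X x y) <= (expR eps)%:E * P (mech_event f S X x' y))%E.
Proof.
move=> _ mf domf s_gt0 eps_gt0 lapX indepX x x' y xx'.
have b_gt0 : 0 < s / eps by exact: divr_gt0.
have mnoise := measurable_noise lapX.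
have [a a_le out_sub] := dominating_set_translate y domf (ltW s_gt0) xx'.
rewrite !mech_event_noiseE.
apply: le_trans (le_measure _ _ _ (preimage_subset (f:=noise S X) out_sub)) _.
- rewrite inE -[X in measurable X]setTI.
  exact: (mnoise measurableT _ (measurable_output_set S x (mf y))).
- rewrite inE -[X in measurable X]setTI.
  apply: (measurableT_comp (measurable_translate _) mnoise measurableT).
  exact: measurable_output_set.
apply: le_trans (noise_translate_le b_gt0 lapX indepX a (enum_uniq _) _
  (measurable_output_set S x' (mf y))) _; first by move=> i; rewrite mem_enum.
rewrite lee_wpmul2r // lee_fin ler_expR big_enum /= ler_pdivrMr //.
by rewrite mulrCA divff ?mulr1 // gt_eqF.
Qed.
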